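(* Let $h_0\in(0,2\pi)$, $\alpha>0$ and $T>0$ be constants. Let $k\colon[0,2\pi]\to(0,+\infty)$ be a twice continuously differentiable positive function with $k(0)=k(2\pi)$, $k'(0)=k'(2\pi)$, and let $\varphi\colon[-h_0,2\pi]\to[0,+\infty)$ be a twice continuously differentiable nonnegative function with $\int_0^{2\pi}\varphi(x)\,\mathrm{d}x=1$ and $\varphi(x)=\varphi(x+2\pi)$ for all $x\in[-h_0,0]$. Suppose that for every $h\in(0,h_0]$ there exists a solution $u_h\in\mathbf C^{2,1}([0,2\pi]\times[0,T])$ of the problem $$\frac{\partial u(x,t)}{\partial t}=u(x,t)\bigl(k(x)\,u(x-h,t)-f[u(\cdot,t)]\bigr)+\alpha\frac{\partial^2u(x,t)}{\partial x^2},\quad 0\le x\le 2\pi,\ 0\le t\le T,$$ $$u(x,0)=\varphi(x),\qquad u(0,t)=u(2\pi,t),\qquad \frac{\partial u}{\partial x}(0,t)=\frac{\partial u}{\partial x}(2\pi,t),$$ where $u(x-h,t):=u(x-h+2\pi,t)$ whenever $x-h<0$ and $f[u(\cdot,t)]=\int_0^{2\pi}k(x)\,u(x,t)\,u(x-h,t)\,\mathrm{d}x$. Assume moreover that $$\sup_{0<h\le h_0}\|u_h\|_{\mathbf C^{2,1}([0,2\pi]\times[0,T])}<\infty.$$ Then there exists $h^*\in(0,h_0]$ such that $u_h$ is a nonnegative function on $[0,2\pi]\times[0,T]$ for every $h\in(0,h^*]$.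
   Context: $\mathbf C^{2,1}([0,2\pi]\times[0,T])$ denotes the Banach space of continuous functions $w(x,t)$ on $[0,2\pi]\times[0,T]$ such that $\partial w/\partial x$, $\partial^2 w/\partial x^2$, $\partial w/\partial t$ are continuous on $[0,2\pi]\times[0,T]$ (continuity up to the boundary meaning the limits from the interior exist and are taken as boundary values), with norm $$\|w\|_{\mathbf C^{2,1}}=\max_{0\le x\le2\pi,\,0\le t\le T}\Bigl\{|w|+\Bigl|\tfrac{\partial w}{\partial x}\Bigr|+\Bigl|\tfrac{\partial^2 w}{\partial x^2}\Bigr|+\Bigl|\tfrac{\partial w}{\partial t}\Bigr|\Bigr\}.$$ *)

From Stdlib Require Import Reals Lra.
From Coquelicot Require Import Coquelicot.
Open Scope R_scope.

Definition cont_on_interval (f : R -> R) (a b : R) : Prop :=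
  forall x, a <= x <= b -> forall eps, 0 < eps -> exists delta, 0 < delta /\
    forall y, a <= y <= b -> Rabs (y - x) < delta -> Rabs (f y - f x) < eps.

(* f is C^2 on [a,b]: f1, f2 are continuous on [a,b] and are the first and
   second derivatives of f on (a,b) (continuity up to the boundary: the
   boundary values of the derivatives are the limits from the interior). *)
Definition C2_on (f f1 f2 : R -> R) (a b : R) : Prop :=
  cont_on_interval f a b /\ cont_on_interval f1 a b /\ cont_on_interval f2 a b /\
  (forall x, a < x < b -> is_derive f x (f1 x)) /\
  (forall x, a < x < b -> is_derive f1 x (f2 x)).

Definition cont_on_rect (w : R -> R -> R) (T : R) : Prop :=
  forall x t, 0 <= x <= 2 * PI -> 0 <= t <= T ->
  forall eps, 0 < eps -> exists delta, 0 < delta /\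
    forall y s, 0 <= y <= 2 * PI -> 0 <= s <= T ->
      Rabs (y - x) < delta -> Rabs (s - t) < delta ->
      Rabs (w y s - w x t) < eps.

(* w belongs to C^{2,1}([0,2pi] x [0,T]), with wx, wxx, wt the continuous
   extensions to the closed rectangle of dw/dx, d^2w/dx^2, dw/dt. *)
Definition C21 (w wx wxx wt : R -> R -> R) (T : R) : Prop :=
  cont_on_rect w T /\ cont_on_rect wx T /\ cont_on_rect wxx T /\ cont_on_rect wt T /\
  (forall x t, 0 < x < 2 * PI -> 0 < t < T ->
     is_derive (fun y => w y t) x (wx x t)) /\
  (forall x t, 0 < x < 2 * PI -> 0 < t < T ->
     is_derive (fun y => wx y t) x (wxx x t)) /\
  (forall x t, 0 < x < 2 * PI -> 0 < t < T ->
     is_derive (fun s => w x s) t (wt x t)).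

(* The pointwise quantity |w|+|w_x|+|w_xx|+|w_t| whose max is the C^{2,1} norm. *)
Definition C21_pt (w wx wxx wt : R -> R -> R) (x t : R) : R :=
  Rabs (w x t) + Rabs (wx x t) + Rabs (wxx x t) + Rabs (wt x t).

Definition delayed (u : R -> R -> R) (h x t : R) : R :=
  if Rlt_dec (x - h) 0 then u (x - h + 2 * PI) t else u (x - h) t.

Definition fnl (k : R -> R) (u : R -> R -> R) (h t : R) : R :=
  RInt (fun x => k x * u x t * delayed u h x t) 0 (2 * PI).

From Stdlib Require Import Reals Lra ClassicalEpsilon.
From Coquelicot Require Import Coquelicot.
Open Scope R_scope.

(* For a fixed h the solution u = u_h satisfies the linear equation
   u_t = c u + alpha u_xx with c(x,t) = k(x) u(x-h,t) - f[u(.,t)], and the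
   uniform C^{2,1} bound makes c bounded, |c| <= C.  The weak maximum
   principle then gives u_h >= 0 for every h in (0,h0], so h* = h0 works:
   if w = e^{-lam t} u with lam > C had a negative minimum on
   [0,2pi] x [0,tau], then at the minimum point (moved off x = 2pi by
   periodicity) u_xx >= 0 and u_t <= lam u, whereas the equation gives
   u_t >= c u > lam u. *)

Lemma locally_Rabs (P : R -> Prop) (x : R) (d : posreal) :
  (forall y, Rabs (y - x) < d -> P y) -> locally x P.
Proof. intros H. exists d. intros y Hy. apply H. exact Hy. Qed.

Definition clamp (a b x : R) : R := Rmax a (Rmin b x).

Lemma clamp_in (a b x : R) : a <= b -> a <= clamp a b x <= b.
Proof. intros. unfold clamp, Rmax, Rmin. repeat destruct Rle_dec; lra. Qed.

Lemma clamp_id (a b x : R) : a <= x <= b -> clamp a b x = x.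
Proof. intros. unfold clamp, Rmax, Rmin. repeat destruct Rle_dec; lra. Qed.

Lemma clamp_lipschitz (a b x y : R) :
  a <= b -> Rabs (clamp a b y - clamp a b x) <= Rabs (y - x).
Proof.
intros. unfold clamp, Rmax, Rmin, Rabs.
repeat destruct Rle_dec; repeat destruct Rcase_abs; lra.
Qed.

Lemma clamp_locally_id (a b x : R) : a < x < b -> locally x (fun y => clamp a b y = y).
Proof.
intros Hx. assert (Hd : 0 < Rmin (x - a) (b - x)) by (apply Rmin_glb_lt; lra).
apply (locally_Rabs _ _ (mkposreal _ Hd)). simpl. intros y Hy.
apply Rabs_def2 in Hy.
pose proof (Rmin_l (x - a) (b - x)). pose proof (Rmin_r (x - a) (b - x)).
apply clamp_id. lra.
Qed.

Lemma continuity_pt_clamp (f : R -> R) (a b x : R) :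
  a <= b -> cont_on_interval f a b -> continuity_pt (fun y => f (clamp a b y)) x.
Proof.
intros Hab Hf. apply continuity_pt_locally. intros eps.
destruct (Hf (clamp a b x) (clamp_in a b x Hab) eps (cond_pos eps)) as [d [Hd Hfd]].
apply (locally_Rabs _ _ (mkposreal d Hd)). simpl. intros y Hy. apply Hfd.
- apply clamp_in; exact Hab.
- eapply Rle_lt_trans; [apply clamp_lipschitz; exact Hab | exact Hy].
Qed.

Lemma cont_on_interval_bounded (f : R -> R) (a b : R) :
  a <= b -> cont_on_interval f a b -> exists K, forall x, a <= x <= b -> Rabs (f x) <= K.
Proof.
intros Hab Hf.
destruct (continuity_ab_maj (fun x => Rabs (f (clamp a b x))) a b Hab) as [xM [HxM _]].
{ intros x _. apply (continuity_pt_comp (fun y => f (clamp a b y)) Rabs).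
  - apply continuity_pt_clamp; assumption.
  - apply Rcontinuity_abs. }
exists (Rabs (f (clamp a b xM))). intros x Hx.
specialize (HxM x Hx). simpl in HxM. rewrite clamp_id in HxM by exact Hx. exact HxM.
Qed.

Lemma MVT_interval (f df : R -> R) (a b : R) : a <= b ->
  (forall x, a <= x <= b -> continuity_pt f x) ->
  (forall x, a < x < b -> is_derive f x (df x)) ->
  exists c, a <= c <= b /\ f b - f a = df c * (b - a).
Proof.
intros Hab Hf Hdf.
destruct (MVT_gen f a b df) as [c [Hc Hfc]];
  rewrite ?Rmin_left, ?Rmax_right by exact Hab; auto.
rewrite Rmin_left, Rmax_right in Hc by exact Hab. now exists c.
Qed.

Lemma MVT_le (f df : R -> R) (a b m : R) : a <= b ->
  (forall x, a <= x <= b -> continuity_pt f x) ->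
  (forall x, a < x < b -> is_derive f x (df x)) ->
  (forall x, a <= x <= b -> df x <= m) -> f b - f a <= m * (b - a).
Proof.
intros Hab Hf Hdf Hm. destruct (MVT_interval f df a b Hab Hf Hdf) as [c [Hc ->]].
apply Rmult_le_compat_r; [lra | exact (Hm c Hc)].
Qed.

Section MinimumOnInterval.

Variables (f df d2f : R -> R) (a b x0 : R).
Hypothesis f_cont : forall x, a <= x <= b -> continuity_pt f x.
Hypothesis f_deriv : forall x, a < x < b -> is_derive f x (df x).
Hypothesis x0_min : forall x, a <= x <= b -> f x0 <= f x.

Lemma deriv_nonpos_at_min : a < x0 <= b -> continuity_pt df x0 -> df x0 <= 0.
Proof.
intros Hx0 Hdf0. apply Rnot_lt_le. intros Hpos.
pose proof (proj1 (continuity_pt_locally df x0) Hdf0) as Hdf0'.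
destruct (Hdf0' (mkposreal _ (Rdiv_lt_0_compat _ 2 Hpos Rlt_0_2))) as [d Hd]. simpl in Hd.
set (y := Rmax a (x0 - d / 2)).
assert (Hya : a <= y) by apply Rmax_l.
assert (Hyd : x0 - d / 2 <= y) by apply Rmax_r.
assert (Hyx : y < x0) by (apply Rmax_lub_lt; pose proof (cond_pos d); lra).
destruct (MVT_interval f df y x0) as [c [Hc Hfc]]; [lra | intros; apply f_cont; lra
  | intros; apply f_deriv; lra |].
assert (Hdfc : 0 < df c).
{ assert (Hcd : Rabs (c - x0) < d) by (apply Rabs_def1; lra).
  specialize (Hd c Hcd). apply Rabs_def2 in Hd. lra. }
pose proof (x0_min y ltac:(lra)).
assert (0 < df c * (x0 - y)) by (apply Rmult_lt_0_compat; lra). lra.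
Qed.

Hypothesis df_cont : forall x, a <= x <= b -> continuity_pt df x.
Hypothesis df_deriv : forall x, a < x < b -> is_derive df x (d2f x).

Lemma deriv2_nonneg_at_min :
  a <= x0 < b -> continuity_pt d2f x0 -> df x0 <= 0 -> 0 <= d2f x0.
Proof.
intros Hx0 Hd2f0 Hdf0. apply Rnot_lt_le. intros Hneg.
set (m := d2f x0 / 2).
pose proof (proj1 (continuity_pt_locally d2f x0) Hd2f0) as Hd2f0'.
destruct (Hd2f0' (mkposreal (- m) ltac:(unfold m; lra))) as [d Hd]. simpl in Hd.
set (y := Rmin b (x0 + d / 2)).
assert (Hyb : y <= b) by apply Rmin_l.
assert (Hyd : y <= x0 + d / 2) by apply Rmin_r.
assert (Hxy : x0 < y) by (apply Rmin_glb_lt; pose proof (cond_pos d); lra).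
assert (Hdf_le : forall z, x0 <= z <= y -> df z <= df x0 + m * (z - x0)).
{ intros z Hz. enough (df z - df x0 <= m * (z - x0)) by lra.
  apply (MVT_le df d2f); [lra | intros; apply df_cont; lra | intros; apply df_deriv; lra |].
  intros w Hw. assert (Hwd : Rabs (w - x0) < d) by (apply Rabs_def1; lra).
  specialize (Hd w Hwd). apply Rabs_def2 in Hd. unfold m in *. lra. }
(* The mean value theorem only locates its point in the closed interval, so
   the strict decrease of [f] is obtained on the second half [mid, y]. *)
set (mid := (x0 + y) / 2).
assert (H1 : f mid - f x0 <= 0 * (mid - x0)).
{ apply (MVT_le f df); [unfold mid; lra | intros; apply f_cont; unfold mid in *; lra
  | intros; apply f_deriv; unfold mid in *; lra |].
  intros z Hz. specialize (Hdf_le z ltac:(unfold mid in *; lra)).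
  assert (m * (z - x0) <= 0) by (apply Rmult_le_0_r; unfold m; lra). lra. }
assert (H2 : f y - f mid <= m * (mid - x0) * (y - mid)).
{ apply (MVT_le f df); [unfold mid; lra | intros; apply f_cont; unfold mid in *; lra
  | intros; apply f_deriv; unfold mid in *; lra |].
  intros z Hz. specialize (Hdf_le z ltac:(unfold mid in *; lra)).
  assert (m * (z - x0) <= m * (mid - x0)) by (apply Rmult_le_compat_neg_l; unfold m, mid in *; lra).
  lra. }
assert (m * (mid - x0) * (y - mid) < 0)
  by (apply Rmult_neg_pos; [apply Rmult_neg_pos |]; unfold m, mid; lra).
pose proof (x0_min y ltac:(lra)). lra.
Qed.

End MinimumOnInterval.

Lemma exists_interior_near (a b x0 d : R) :
  a < b -> a <= x0 <= b -> 0 < d -> exists x, a < x < b /\ Rabs (x - x0) < d.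
Proof.
intros Hab Hx0 Hd. set (r := Rmin (d / 2) ((b - a) / 4)).
assert (Hr1 : r <= d / 2) by apply Rmin_l.
assert (Hr2 : r <= (b - a) / 4) by apply Rmin_r.
assert (Hr : 0 < r) by (apply Rmin_glb_lt; lra).
destruct (Rle_lt_dec x0 ((a + b) / 2)).
- exists (x0 + r). split; [lra |]. apply Rabs_def1; lra.
- exists (x0 - r). split; [lra |]. apply Rabs_def1; lra.
Qed.

Lemma nonneg_at_right_end (g : R -> R) (c d : R) :
  c < d -> continuity_pt g d -> (forall t, c <= t < d -> 0 <= g t) -> 0 <= g d.
Proof.
intros Hcd Hg Hnonneg. apply Rnot_lt_le. intros Hneg.
pose proof (proj1 (continuity_pt_locally g d) Hg) as Hg'.
destruct (Hg' (mkposreal (- g d) ltac:(lra))) as [r Hr]. simpl in Hr.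
set (t := Rmax c (d - r / 2)).
assert (Htc : c <= t) by apply Rmax_l.
assert (Htr : d - r / 2 <= t) by apply Rmax_r.
assert (Htd : t < d) by (apply Rmax_lub_lt; pose proof (cond_pos r); lra).
assert (Htr' : Rabs (t - d) < r) by (apply Rabs_def1; pose proof (cond_pos r); lra).
specialize (Hr t Htr'). apply Rabs_def2 in Hr.
pose proof (Hnonneg t ltac:(lra)). lra.
Qed.

Lemma continuity_2d_pt_slice_x (W : R -> R -> R) (x t : R) :
  continuity_2d_pt W x t -> continuity_pt (fun y => W y t) x.
Proof.
intros HW. apply continuity_pt_locally. intros eps.
destruct (HW eps) as [d Hd]. apply (locally_Rabs _ _ d). intros y Hy.
apply Hd; [exact Hy | rewrite Rminus_eq_0, Rabs_R0; apply cond_pos].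
Qed.

Lemma continuity_2d_pt_slice_t (W : R -> R -> R) (x t : R) :
  continuity_2d_pt W x t -> continuity_pt (fun s => W x s) t.
Proof.
intros HW. apply continuity_pt_locally. intros eps.
destruct (HW eps) as [d Hd]. apply (locally_Rabs _ _ d). intros s Hs.
apply Hd; [rewrite Rminus_eq_0, Rabs_R0; apply cond_pos | exact Hs].
Qed.

Lemma continuity_2d_pt_exp_t (lam x t : R) :
  continuity_2d_pt (fun _ s => exp (- lam * s)) x t.
Proof.
apply (continuity_1d_2d_pt_comp (fun s => exp (- lam * s)) (fun _ s => s)).
- apply continuity_pt_filterlim, (ex_derive_continuous (fun s => exp (- lam * s))).
  auto_derive. exact I.
- apply continuity_2d_pt_id2.
Qed.

Lemma continuity_2d_rect_min (W : R -> R -> R) (a b c d : R) : a <= b -> c <= d ->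
  (forall x t, continuity_2d_pt W x t) ->
  exists x0 t0, a <= x0 <= b /\ c <= t0 <= d /\
    forall x t, a <= x <= b -> c <= t <= d -> W x0 t0 <= W x t.
Proof.
intros Hab Hcd HW.
assert (Hargmin : forall t, exists x0, a <= x0 <= b /\ forall x, a <= x <= b -> W x0 t <= W x t).
{ intros t. destruct (continuity_ab_min (fun x => W x t) a b Hab) as [x0 [Hmin Hx0]].
  - intros x _. apply continuity_2d_pt_slice_x, HW.
  - now exists x0. }
set (xm t := proj1_sig (constructive_indefinite_description _ (Hargmin t))).
assert (Hxm : forall t, a <= xm t <= b /\ forall x, a <= x <= b -> W (xm t) t <= W x t)
  by (intros t; exact (proj2_sig (constructive_indefinite_description _ (Hargmin t)))).
assert (Hmin_cont : forall t, continuity_pt (fun s => W (xm s) s) t).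
{ intros t. apply continuity_pt_locally. intros eps.
  destruct (uniform_continuity_2d_1d W a b t (fun x _ => HW x t) eps) as [r Hr].
  apply (locally_Rabs _ _ r). intros s Hs.
  destruct (Hxm s) as [Hs_in Hs_min]. destruct (Hxm t) as [Ht_in Ht_min].
  assert (Hs' : t - r <= s <= t + r) by (apply Rabs_def2 in Hs; lra).
  assert (Ht' : t - r <= t <= t + r) by (pose proof (cond_pos r); lra).
  assert (Hd0 : Rabs 0 < r) by (rewrite Rabs_R0; apply cond_pos).
  assert (E1 := Hr (xm t) t (xm t) s Ht_in Ht' Ht_in Hs'
    ltac:(rewrite Rminus_eq_0; exact Hd0)).
  assert (E2 := Hr (xm s) t (xm s) s Hs_in Ht' Hs_in Hs'
    ltac:(rewrite Rminus_eq_0; exact Hd0)).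
  pose proof (Hs_min (xm t) Ht_in). pose proof (Ht_min (xm s) Hs_in).
  apply Rabs_def2 in E1. apply Rabs_def2 in E2. apply Rabs_def1; lra. }
destruct (continuity_ab_min (fun s => W (xm s) s) c d Hcd (fun t _ => Hmin_cont t))
  as [t0 [Ht0_min Ht0]].
exists (xm t0), t0. destruct (Hxm t0) as [Hx0 _].
split; [exact Hx0 | split; [exact Ht0 |]]. intros x t Hx Ht.
specialize (Ht0_min t Ht). simpl in Ht0_min.
pose proof (proj2 (Hxm t) x Hx). lra.
Qed.

Lemma deriv_t_nonpos_at_min (W Wt : R -> R -> R) (a b c x0 t0 : R) :
  a < b -> a <= x0 <= b -> c < t0 ->
  (forall x t, continuity_2d_pt W x t) -> continuity_2d_pt Wt x0 t0 ->
  (forall x t, a < x < b -> c < t < t0 -> is_derive (fun s => W x s) t (Wt x t)) ->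
  (forall x t, a <= x <= b -> c <= t <= t0 -> W x0 t0 <= W x t) -> Wt x0 t0 <= 0.
Proof.
intros Hab Hx0 Ht0 HW HWt HWder Hmin. apply Rnot_lt_le. intros Hpos.
set (eta := Wt x0 t0 / 2).
assert (Heta : 0 < eta) by (unfold eta; lra).
destruct (HWt (mkposreal eta Heta)) as [d1 Hd1]. simpl in Hd1.
set (s := Rmin (d1 / 2) (t0 - c)).
assert (Hs1 : s <= d1 / 2) by apply Rmin_l.
assert (Hs2 : s <= t0 - c) by apply Rmin_r.
assert (Hs : 0 < s) by (apply Rmin_glb_lt; pose proof (cond_pos d1); lra).
destruct (HW x0 t0 (mkposreal (eta * s) (Rmult_lt_0_compat _ _ Heta Hs))) as [d2 Hd2].
simpl in Hd2.
destruct (exists_interior_near a b x0 (Rmin d1 d2) Hab Hx0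
  ltac:(apply Rmin_glb_lt; apply cond_pos)) as [x [Hx Hxx0]].
pose proof (Rmin_l d1 d2). pose proof (Rmin_r d1 d2).
(* Near (x0, t0) the time derivative exceeds eta, so W x decreases by at least
   eta * s going back to time t0 - s, for an x so close to x0 that W x t0
   differs from W x0 t0 by less than eta * s. *)
destruct (MVT_interval (fun r => W x r) (Wt x) (t0 - s) t0) as [r [Hr HWr]];
  [lra | intros; apply continuity_2d_pt_slice_t, HW | intros; apply HWder; lra |].
assert (HWtr : eta < Wt x r).
{ assert (Hr0 : Rabs (r - t0) < d1) by (apply Rabs_def1; pose proof (cond_pos d1); lra).
  specialize (Hd1 x r ltac:(lra) Hr0). apply Rabs_def2 in Hd1. unfold eta in *. lra. }
assert (Hnear : Rabs (W x t0 - W x0 t0) < eta * s).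
{ apply Hd2; [lra | rewrite Rminus_eq_0, Rabs_R0; apply cond_pos]. }
apply Rabs_def2 in Hnear.
pose proof (Hmin x (t0 - s) ltac:(lra) ltac:(lra)).
replace (t0 - (t0 - s)) with s in HWr by ring.
assert (eta * s < Wt x r * s) by (apply Rmult_lt_compat_r; lra). lra.
Qed.

(* Clamping extends a function continuous on the rectangle to one continuous on
   all of R x R, to which Coquelicot's [continuity_2d_pt] results apply. *)
Definition rect_ext (T : R) (W : R -> R -> R) (x t : R) : R :=
  W (clamp 0 (2 * PI) x) (clamp 0 T t).

Lemma rect_ext_id (T : R) (W : R -> R -> R) (x t : R) :
  0 <= x <= 2 * PI -> 0 <= t <= T -> rect_ext T W x t = W x t.
Proof. intros Hx Ht. unfold rect_ext. now rewrite !clamp_id. Qed.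

Lemma continuity_2d_pt_rect_ext (T : R) (W : R -> R -> R) (x t : R) :
  0 <= T -> cont_on_rect W T -> continuity_2d_pt (rect_ext T W) x t.
Proof.
intros HT HW eps. pose proof PI_RGT_0.
destruct (HW (clamp 0 (2 * PI) x) (clamp 0 T t) (clamp_in 0 (2 * PI) x ltac:(lra))
  (clamp_in 0 T t HT) eps (cond_pos eps)) as [d [Hd Hclose]].
exists (mkposreal d Hd). simpl. intros y s Hy Hs. apply Hclose.
- apply clamp_in; lra.
- apply clamp_in; exact HT.
- eapply Rle_lt_trans; [apply clamp_lipschitz; lra | exact Hy].
- eapply Rle_lt_trans; [apply clamp_lipschitz; exact HT | exact Hs].
Qed.

Lemma rect_ext_is_derive_x (T : R) (W : R -> R -> R) (x t l : R) :
  0 < x < 2 * PI -> 0 <= t <= T -> is_derive (fun y => W y t) x l ->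
  is_derive (fun y => rect_ext T W y t) x l.
Proof.
intros Hx Ht. apply is_derive_ext_loc.
apply (filter_imp (fun y => clamp 0 (2 * PI) y = y)); [| exact (clamp_locally_id _ _ _ Hx)].
intros y Hy.
unfold rect_ext. now rewrite Hy, (clamp_id 0 T t Ht).
Qed.

Lemma rect_ext_is_derive_t (T : R) (W : R -> R -> R) (x t l : R) :
  0 <= x <= 2 * PI -> 0 < t < T -> is_derive (fun s => W x s) t l ->
  is_derive (fun s => rect_ext T W x s) t l.
Proof.
intros Hx Ht. apply is_derive_ext_loc.
apply (filter_imp (fun s => clamp 0 T s = s)); [| exact (clamp_locally_id _ _ _ Ht)].
intros s Hs.
unfold rect_ext. now rewrite Hs, (clamp_id 0 (2 * PI) x Hx).
Qed.

Lemma is_derive_exp_weight (g : R -> R) (lam t dg : R) : is_derive g t dg ->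
  is_derive (fun s => exp (- lam * s) * g s) t (exp (- lam * t) * (dg - lam * g t)).
Proof.
intros Hg.
assert (Hexp : is_derive (fun s => exp (- lam * s)) t (- lam * exp (- lam * t)))
  by (auto_derive; [exact I | ring]).
pose proof (is_derive_mult _ _ _ _ _ Hexp Hg Rmult_comm) as Hprod.
unfold plus, mult in Hprod. simpl in Hprod.
replace (exp (- lam * t) * (dg - lam * g t))
  with (- lam * exp (- lam * t) * g t + exp (- lam * t) * dg) by ring.
exact Hprod.
Qed.

Section MinimumOfC21.

Variables (T : R) (U Ux Uxx Ut : R -> R -> R).
Hypothesis T_pos : 0 < T.
Hypothesis U_C21 : C21 U Ux Uxx Ut T.

Let ext_cont (W : R -> R -> R) (HW : cont_on_rect W T) (x t : R) :
  continuity_2d_pt (rect_ext T W) x t :=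
  continuity_2d_pt_rect_ext T W x t (Rlt_le _ _ T_pos) HW.

Lemma C21_min_Uxx_nonneg (x0 t0 : R) :
  U 0 t0 = U (2 * PI) t0 -> Ux 0 t0 = Ux (2 * PI) t0 ->
  0 <= x0 < 2 * PI -> 0 < t0 < T ->
  (forall x, 0 <= x <= 2 * PI -> U x0 t0 <= U x t0) -> 0 <= Uxx x0 t0.
Proof.
intros HU_per HUx_per Hx0 Ht0 Hmin. pose proof PI_RGT_0.
destruct U_C21 as [HU [HUx [HUxx [_ [Hdx [Hdxx _]]]]]].
assert (Ht0' : 0 <= t0 <= T) by lra.
set (f := fun y => rect_ext T U y t0).
set (df := fun y => rect_ext T Ux y t0).
set (d2f := fun y => rect_ext T Uxx y t0).
assert (Hcont : forall W, cont_on_rect W T -> forall x, continuity_pt (fun y => rect_ext T W y t0) x)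
  by (intros W HW x; exact (continuity_2d_pt_slice_x _ _ _ (ext_cont W HW x t0))).
assert (Hf_cont : forall x, 0 <= x <= 2 * PI -> continuity_pt f x) by (intros x _; apply Hcont, HU).
assert (Hdf_cont : forall x, 0 <= x <= 2 * PI -> continuity_pt df x) by (intros x _; apply Hcont, HUx).
assert (Hf : forall x, 0 < x < 2 * PI -> is_derive f x (df x)).
{ intros x Hx. unfold df. rewrite rect_ext_id by lra.
  apply rect_ext_is_derive_x; [lra | lra | apply Hdx; lra]. }
assert (Hdf : forall x, 0 < x < 2 * PI -> is_derive df x (d2f x)).
{ intros x Hx. unfold d2f. rewrite rect_ext_id by lra.
  apply rect_ext_is_derive_x; [lra | lra | apply Hdxx; lra]. }
assert (Hfmin : forall x1, 0 <= x1 <= 2 * PI -> U x1 t0 = U x0 t0 ->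
  forall x, 0 <= x <= 2 * PI -> f x1 <= f x).
{ intros x1 Hx1 HUx1 x Hx. unfold f. rewrite !rect_ext_id by lra. rewrite HUx1. auto. }
assert (Hslope : df x0 <= 0).
{ destruct (Req_dec x0 0) as [E | E].
  - (* At x0 = 0 the slope is read off at 2 * PI, which is also a minimum. *)
    unfold df. rewrite E, !rect_ext_id, HUx_per by lra.
    rewrite <- (rect_ext_id T Ux (2 * PI) t0) by lra.
    apply (deriv_nonpos_at_min f df 0 (2 * PI) (2 * PI)); auto; [| lra | apply Hdf_cont; lra].
    apply Hfmin; [lra | rewrite <- HU_per, E; reflexivity].
  - apply (deriv_nonpos_at_min f df 0 (2 * PI) x0); auto; [| lra | apply Hdf_cont; lra].
    apply Hfmin; [lra | reflexivity]. }
rewrite <- (rect_ext_id T Uxx x0 t0) by lra.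
apply (deriv2_nonneg_at_min f df d2f 0 (2 * PI) x0); auto; [| apply Hcont, HUxx].
apply Hfmin; [lra | reflexivity].
Qed.

Lemma C21_min_Ut_le (lam x0 t0 : R) : 0 <= x0 <= 2 * PI -> 0 < t0 < T ->
  (forall x t, 0 <= x <= 2 * PI -> 0 <= t <= t0 ->
     exp (- lam * t0) * U x0 t0 <= exp (- lam * t) * U x t) ->
  Ut x0 t0 <= lam * U x0 t0.
Proof.
intros Hx0 Ht0 Hmin. pose proof PI_RGT_0.
destruct U_C21 as [HU [_ [_ [HUt [_ [_ Hdt]]]]]].
set (W := fun x t => exp (- lam * t) * rect_ext T U x t).
set (Wt := fun x t => exp (- lam * t) * (rect_ext T Ut x t - lam * rect_ext T U x t)).
assert (HWt_le : Wt x0 t0 <= 0).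
{ apply (deriv_t_nonpos_at_min W Wt 0 (2 * PI) 0 x0 t0); [lra | lra | lra | | | |].
  - intros x t. apply continuity_2d_pt_mult; [apply continuity_2d_pt_exp_t | exact (ext_cont U HU x t)].
  - apply continuity_2d_pt_mult; [apply continuity_2d_pt_exp_t |].
    apply continuity_2d_pt_minus; [exact (ext_cont Ut HUt x0 t0) |].
    apply continuity_2d_pt_mult; [apply continuity_2d_pt_const | exact (ext_cont U HU x0 t0)].
  - intros x t Hx Ht. unfold W, Wt. rewrite (rect_ext_id T Ut) by lra.
    apply is_derive_exp_weight, rect_ext_is_derive_t; [lra | lra | apply Hdt; lra].
  - intros x t Hx Ht. unfold W. rewrite !rect_ext_id by lra. auto. }
unfold Wt in HWt_le. rewrite !rect_ext_id in HWt_le by lra.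
pose proof (exp_pos (- lam * t0)). nra.
Qed.

End MinimumOfC21.

Section MaximumPrinciple.

Variables (T alpha C : R) (U Ux Uxx Ut c : R -> R -> R).
Hypothesis T_pos : 0 < T.
Hypothesis alpha_pos : 0 < alpha.
Hypothesis U_C21 : C21 U Ux Uxx Ut T.
Hypothesis U_eq : forall x t, 0 <= x <= 2 * PI -> 0 <= t <= T ->
  Ut x t = U x t * c x t + alpha * Uxx x t.
Hypothesis c_bound : forall x t, 0 <= x <= 2 * PI -> 0 <= t <= T -> Rabs (c x t) <= C.
Hypothesis U_init : forall x, 0 <= x <= 2 * PI -> 0 <= U x 0.
Hypothesis U_per : forall t, 0 <= t <= T -> U 0 t = U (2 * PI) t.
Hypothesis Ux_per : forall t, 0 <= t <= T -> Ux 0 t = Ux (2 * PI) t.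

(* [C21] provides x-derivatives only for t < T, hence the cut-off time tau. *)
Lemma parabolic_nonneg_before (tau : R) : 0 <= tau < T ->
  forall x t, 0 <= x <= 2 * PI -> 0 <= t <= tau -> 0 <= U x t.
Proof.
intros Htau. pose proof PI_RGT_0.
set (lam := Rabs C + 1).
destruct (continuity_2d_rect_min (fun x t => exp (- lam * t) * rect_ext T U x t)
  0 (2 * PI) 0 tau) as [x0 [t0 [Hx0 [Ht0 Hmin]]]]; [lra | lra | |].
{ intros x t. apply continuity_2d_pt_mult; [apply continuity_2d_pt_exp_t |].
  apply continuity_2d_pt_rect_ext; [lra | exact (proj1 U_C21)]. }
assert (Hwmin : forall x t, 0 <= x <= 2 * PI -> 0 <= t <= tau ->
  exp (- lam * t0) * U x0 t0 <= exp (- lam * t) * U x t).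
{ intros x t Hx Ht. pose proof (Hmin x t Hx Ht) as Hxt. simpl in Hxt.
  rewrite !rect_ext_id in Hxt by lra. exact Hxt. }
enough (0 <= U x0 t0).
{ intros x t Hx Ht. pose proof (Hwmin x t Hx Ht).
  pose proof (exp_pos (- lam * t0)). pose proof (exp_pos (- lam * t)). nra. }
apply Rnot_lt_le. intros Hneg.
assert (Ht0_pos : 0 < t0).
{ destruct (Req_dec t0 0) as [E | E]; [| lra].
  rewrite E in Hneg. pose proof (U_init x0 Hx0). lra. }
set (x1 := if Req_EM_T x0 (2 * PI) then 0 else x0).
assert (Hx1 : 0 <= x1 < 2 * PI /\ U x1 t0 = U x0 t0).
{ unfold x1. destruct (Req_EM_T x0 (2 * PI)) as [E | E].
  - rewrite E, U_per by lra. split; [lra | reflexivity].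
  - split; [lra | reflexivity]. }
destruct Hx1 as [Hx1 HUx1].
assert (HUxx : 0 <= Uxx x1 t0).
{ apply (C21_min_Uxx_nonneg T U Ux Uxx Ut); [exact T_pos | exact U_C21
  | apply U_per; lra | apply Ux_per; lra | exact Hx1 | lra |].
  intros x Hx. rewrite HUx1. apply Rmult_le_reg_l with (exp (- lam * t0)).
  - apply exp_pos.
  - apply Hwmin; lra. }
assert (HUt : Ut x1 t0 <= lam * U x1 t0).
{ apply (C21_min_Ut_le T U Ux Uxx Ut); [exact T_pos | exact U_C21 | lra | lra |].
  intros x t Hx Ht. rewrite HUx1. apply Hwmin; lra. }
(* The equation gives u_t = c u + alpha u_xx >= c u > lam u at the minimum. *)
pose proof (U_eq x1 t0 ltac:(lra) ltac:(lra)).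
assert (Hc : c x1 t0 < lam).
{ pose proof (c_bound x1 t0 ltac:(lra) ltac:(lra)).
  pose proof (Rle_abs (c x1 t0)). pose proof (Rle_abs C). unfold lam. lra. }
assert (0 <= alpha * Uxx x1 t0) by (apply Rmult_le_pos; lra).
nra.
Qed.

Theorem parabolic_nonneg : forall x t, 0 <= x <= 2 * PI -> 0 <= t <= T -> 0 <= U x t.
Proof.
intros x t Hx Ht. destruct (Rlt_le_dec t T) as [HtT | HtT].
- apply (parabolic_nonneg_before t); lra.
- replace t with T by lra. rewrite <- (rect_ext_id T U x T) by lra.
  apply (nonneg_at_right_end (fun s => rect_ext T U x s) 0 T T_pos).
  + apply continuity_2d_pt_slice_t, continuity_2d_pt_rect_ext; [lra | exact (proj1 U_C21)].
  + intros s Hs. rewrite rect_ext_id by lra. apply (parabolic_nonneg_before s); lra.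
Qed.

End MaximumPrinciple.

Lemma Rabs_delayed_le (U : R -> R -> R) (h x t M : R) : 0 < h < 2 * PI -> 0 <= x <= 2 * PI ->
  (forall y, 0 <= y <= 2 * PI -> Rabs (U y t) <= M) -> Rabs (delayed U h x t) <= M.
Proof. intros Hh Hx HM. unfold delayed. destruct (Rlt_dec (x - h) 0); apply HM; lra. Qed.

Lemma ex_RInt_fnl_integrand (k : R -> R) (U : R -> R -> R) (h T t : R) :
  0 < h < 2 * PI -> 0 <= T -> 0 <= t <= T ->
  cont_on_interval k 0 (2 * PI) -> cont_on_rect U T ->
  ex_RInt (fun x => k x * U x t * delayed U h x t) 0 (2 * PI).
Proof.
intros Hh HT Ht Hk HU. pose proof PI_RGT_0.
set (uc := fun x => rect_ext T U x t).
assert (Hpiece : forall a b s, 0 <= a <= b -> b <= 2 * PI ->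
  (forall x, a < x < b -> 0 <= x + s <= 2 * PI /\ delayed U h x t = U (x + s) t) ->
  ex_RInt (fun x => k x * U x t * delayed U h x t) a b).
{ intros a b s Hab Hb Hdel.
  apply (ex_RInt_ext (fun x => k (clamp 0 (2 * PI) x) * uc x * uc (x + s))).
  - intros x Hx. rewrite Rmin_left, Rmax_right in Hx by lra.
    destruct (Hdel x Hx) as [Hxs ->]. unfold uc.
    rewrite clamp_id, !rect_ext_id by lra. reflexivity.
  - apply (ex_RInt_continuous (V := R_CompleteNormedModule)). intros z _.
    assert (Huc : forall y, continuity_pt uc y)
      by (intros y; apply continuity_2d_pt_slice_x, continuity_2d_pt_rect_ext; assumption).
    apply continuity_pt_filterlim.
    apply continuity_pt_mult; [apply continuity_pt_mult |].
    + apply continuity_pt_clamp; [lra | exact Hk].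
    + apply Huc.
    + apply (continuity_pt_comp (fun y => y + s) uc).
      * apply continuity_pt_plus; [apply continuity_pt_id | apply continuity_pt_const; intros ? ?; reflexivity].
      * apply Huc. }
apply (ex_RInt_Chasles _ 0 h (2 * PI)).
- apply (Hpiece 0 h (2 * PI - h)); [lra | lra |]. intros x Hx. split; [lra |].
  unfold delayed. destruct (Rlt_dec (x - h) 0) as [_ | E]; [| lra].
  f_equal; ring.
- apply (Hpiece h (2 * PI) (- h)); [lra | lra |]. intros x Hx. split; [lra |].
  unfold delayed. destruct (Rlt_dec (x - h) 0) as [E | _]; [lra |].
  f_equal; ring.
Qed.

Lemma Rabs_fnl_le (k : R -> R) (U : R -> R -> R) (h T t K M : R) :
  0 < h < 2 * PI -> 0 <= T -> 0 <= t <= T ->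
  cont_on_interval k 0 (2 * PI) -> cont_on_rect U T ->
  (forall x, 0 <= x <= 2 * PI -> Rabs (k x) <= K) ->
  (forall x, 0 <= x <= 2 * PI -> Rabs (U x t) <= M) ->
  Rabs (fnl k U h t) <= 2 * PI * (K * M * M).
Proof.
intros Hh HT Ht Hk HU HK HM. pose proof PI_RGT_0.
unfold fnl. replace (2 * PI * (K * M * M)) with ((2 * PI - 0) * (K * M * M)) by ring.
apply abs_RInt_le_const; [lra | apply (ex_RInt_fnl_integrand k U h T t); assumption |].
intros x Hx. rewrite !Rabs_mult.
pose proof (Rabs_delayed_le U h x t M Hh Hx HM).
apply Rmult_le_compat; [| apply Rabs_pos | | assumption].
- apply Rmult_le_pos; apply Rabs_pos.
- apply Rmult_le_compat; [apply Rabs_pos | apply Rabs_pos | auto | auto].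
Qed.

Lemma Rabs_delay_coef_le (k : R -> R) (U : R -> R -> R) (h T K M : R) :
  0 < h < 2 * PI -> 0 <= T -> cont_on_interval k 0 (2 * PI) -> cont_on_rect U T ->
  (forall x, 0 <= x <= 2 * PI -> Rabs (k x) <= K) ->
  (forall x t, 0 <= x <= 2 * PI -> 0 <= t <= T -> Rabs (U x t) <= M) ->
  forall x t, 0 <= x <= 2 * PI -> 0 <= t <= T ->
  Rabs (k x * delayed U h x t - fnl k U h t) <= K * M + 2 * PI * (K * M * M).
Proof.
intros Hh HT Hk HU HK HM x t Hx Ht.
pose proof (Rabs_fnl_le k U h T t K M Hh HT Ht Hk HU HK (fun y Hy => HM y t Hy Ht)).
pose proof (Rabs_delayed_le U h x t M Hh Hx (fun y Hy => HM y t Hy Ht)).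
eapply Rle_trans; [apply Rabs_triang |]. rewrite Rabs_Ropp, Rabs_mult.
assert (Rabs (k x) * Rabs (delayed U h x t) <= K * M)
  by (apply Rmult_le_compat; [apply Rabs_pos | apply Rabs_pos | auto | auto]).
lra.
Qed.

Theorem theorem4
  (h0 alpha T : R) (k k1 k2 phi phi1 phi2 : R -> R)
  (u ux uxx ut : R -> R -> R -> R) :
  0 < h0 < 2 * PI -> 0 < alpha -> 0 < T ->
  (* k : [0,2pi] -> (0,+oo), C^2, periodic boundary conditions *)
  C2_on k k1 k2 0 (2 * PI) ->
  (forall x, 0 <= x <= 2 * PI -> 0 < k x) ->
  k 0 = k (2 * PI) -> k1 0 = k1 (2 * PI) ->
  (* phi : [-h0,2pi] -> [0,+oo), C^2, normalized, periodic on [-h0,0] *)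
  C2_on phi phi1 phi2 (- h0) (2 * PI) ->
  (forall x, - h0 <= x <= 2 * PI -> 0 <= phi x) ->
  RInt phi 0 (2 * PI) = 1 ->
  (forall x, - h0 <= x <= 0 -> phi x = phi (x + 2 * PI)) ->
  (* for each h in (0,h0], u h is a C^{2,1} solution of the problem *)
  (forall h, 0 < h <= h0 ->
     C21 (u h) (ux h) (uxx h) (ut h) T /\
     (forall x t, 0 <= x <= 2 * PI -> 0 <= t <= T ->
        ut h x t = u h x t * (k x * delayed (u h) h x t - fnl k (u h) h t)
                   + alpha * uxx h x t) /\
     (forall x, 0 <= x <= 2 * PI -> u h x 0 = phi x) /\
     (forall t, 0 <= t <= T -> u h 0 t = u h (2 * PI) t) /\
     (forall t, 0 <= t <= T -> ux h 0 t = ux h (2 * PI) t)) ->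
  (* uniform bound on the C^{2,1} norms *)
  (exists M, forall h, 0 < h <= h0 -> forall x t, 0 <= x <= 2 * PI -> 0 <= t <= T ->
     C21_pt (u h) (ux h) (uxx h) (ut h) x t <= M) ->
  exists hs, 0 < hs <= h0 /\
    forall h, 0 < h <= hs -> forall x t, 0 <= x <= 2 * PI -> 0 <= t <= T ->
      0 <= u h x t.
Proof.
intros Hh0 Halpha HT [Hk _] _ _ _ _ Hphi _ _ Hsol [M HM]. pose proof PI_RGT_0.
destruct (cont_on_interval_bounded k 0 (2 * PI) ltac:(lra) Hk) as [K HK].
exists h0. split; [lra |]. intros h Hh.
destruct (Hsol h Hh) as [HC [Heq [Hinit [Hper Hper_x]]]].
assert (Hu : forall x t, 0 <= x <= 2 * PI -> 0 <= t <= T -> Rabs (u h x t) <= M).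
{ intros x t Hx Ht. pose proof (HM h Hh x t Hx Ht). unfold C21_pt in *.
  pose proof (Rabs_pos (ux h x t)). pose proof (Rabs_pos (uxx h x t)).
  pose proof (Rabs_pos (ut h x t)). lra. }
apply (parabolic_nonneg T alpha (K * M + 2 * PI * (K * M * M)) (u h) (ux h) (uxx h) (ut h)
  (fun x t => k x * delayed (u h) h x t - fnl k (u h) h t)); auto.
- apply Rabs_delay_coef_le; [lra | lra | exact Hk | exact (proj1 HC) | exact HK | exact Hu].
- intros x Hx. rewrite Hinit by exact Hx. apply Hphi. lra.
Qed.
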